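(* In the setting of problem (P) with $f_0(x)=\mathbb{E}_\xi[F(x,\xi)]$, run Algorithm LCSPG with $\gamma_k>L_0/2$, $\beta_k\in(0,2\gamma_k-L_0)$, and suppose there is a constant $B>0$ such that $\|\lambda^{k+1}\|\le B$ for all $k$ and all realizations. Let $\zeta^k:=G^k-\nabla f_0(x^k)$, $D:=\sqrt{(\psi_0(x^0)-\psi_0^* )/L_0}$ and let $\alpha_0,\dots,\alpha_K\ge0$ be nondecreasing. Then $$\sum_{k=0}^K\frac{\alpha_k(2\gamma_k-\beta_k-L_0)}{4(\gamma_k+L_0+2B\|L\|)^2}\|\partial_x\mathcal{L}(x^{k+1},\lambda^{k+1})\|_-^2\le L_0D^2\alpha_K+\sum_{k=0}^K\Big(\frac{\alpha_k(2\gamma_k-\beta_k-L_0)}{2(\gamma_k+L_0+2B\|L\|)^2}+\frac{\alpha_K}{2\beta_k}\Big)\|\zeta^k\|^2,$$ $$\sum_{k=0}^K\alpha_k(2\gamma_k-\beta_k-L_0)\langle\lambda^{k+1},|\psi(x^{k+1})-\eta|\rangle\le2BL_0\|L\|D^2\alpha_K+B\|L\|\sum_{k=0}^K\frac{\alpha_K\|\zeta^k\|^2}{\beta_k}+B\sum_{k=0}^K\alpha_k(2\gamma_k-\beta_k-L_0)\|\eta-\eta^k\|,$$ where $|\cdot|$ is componentwise.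
   Context: Problem (P): minimize $\psi_0(x):=f_0(x)+\chi_0(x)$ over $x\in\mathbb{R}^d$ subject to $\psi_i(x):=f_i(x)+\chi_i(x)\le\eta_i$, $i\in[m]:=\{1,\dots,m\}$. Standing assumptions: $\chi_0$ is proper, convex, lower semicontinuous; each $\chi_i$ ($i\in[m]$) is convex and continuous on $\mathrm{dom}\,\chi_0$; each $f_i$ ($i=0,\dots,m$) is differentiable with $L_i$-Lipschitz gradient on $\mathrm{dom}\,\chi_0$; $L:=(L_1,\dots,L_m)^\top$; the optimal value $\psi_0^*$ of (P) is finite; the feasible set $\mathcal{X}:=\{x\in\mathrm{dom}\,\chi_0:\psi_i(x)\le\eta_i,\ i\in[m]\}$ is nonempty and compact. Write $\psi=(\psi_1,\dots,\psi_m)^\top$; vector inequalities are componentwise. Subdifferential: $\partial\psi_i(x):=\nabla f_i(x)+\partial\chi_i(x)$. Lagrangian $\mathcal{L}(x,\lambda)=\psi_0(x)+\sum_{i=1}^m\lambda_i(\psi_i(x)-\eta_i)$, $\partial_x\mathcal{L}(x,\lambda):=\partial\psi_0(x)+\sum_i\lambda_i\partial\psi_i(x)$; for a set $S$, $\|S\|_-:=\inf\{\|s\|:s\in S\}$. Stochastic setting: $f_0(x)=\mathbb{E}_\xi[F(x,\xi)]$ with $F(\cdot,\xi)$ differentiable; a stochastic first-order oracle returns $\nabla F(x,\xi)$ with $\mathbb{E}[\nabla F(x,\xi)]=\nabla f_0(x)$ and $\mathbb{E}\|\nabla F(x,\xi)-\nabla f_0(x)\|^2\le\sigma^2$. Algorithm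 LCSPG: given $x^0\in\mathrm{dom}\,\chi_0$, $\eta^0$ with $\psi(x^0)<\eta^0<\eta$, batch sizes $b_k$, $\gamma_k>0$. At step $k$: draw $b_k$ i.i.d. samples $\xi_{1,k},\dots,\xi_{b_k,k}$ and set $G^k=\frac1{b_k}\sum_{j}\nabla F(x^k,\xi_{j,k})$; set $\psi_0^k(x)=\langle G^k,x\rangle+\frac{\gamma_k}{2}\|x-x^k\|^2+\chi_0(x)$ and, for $i\in[m]$, $\psi_i^k(x)=f_i(x^k)+\langle\nabla f_i(x^k),x-x^k\rangle+\frac{L_i}{2}\|x-x^k\|^2+\chi_i(x)$; let $x^{k+1}$ minimize $\psi_0^k$ subject to $\psi_i^k(x)\le\eta_i^k$, $i\in[m]$; set $\eta^{k+1}=\eta^k+\delta^k$ with $\delta^k>0$ and $\eta^{k+1}<\eta$. A Lagrange multiplier $\lambda^{k+1}\in\mathbb{R}^m_+$ satisfies $0\in\partial\psi_0^k(x^{k+1})+\sum_i\lambda_i^{k+1}\partial\psi_i^k(x^{k+1})$ and $\lambda_i^{k+1}(\psi_i^k(x^{k+1})-\eta_i^k)=0$. *)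

From HB Require Import structures.
From mathcomp Require Import all_boot all_order all_algebra.
From mathcomp Require Import all_classical all_reals all_analysis.
Set Implicit Arguments. Unset Strict Implicit. Unset Printing Implicit Defensive.
Import Order.TTheory GRing.Theory Num.Theory.
Local Open Scope ring_scope.
Local Open Scope classical_set_scope.

Definition dotv {R : realType} {n : nat} (u v : 'rV[R]_n) : R :=
  \sum_(i < n) u 0 i * v 0 i.
Definition enorm {R : realType} {n : nat} (u : 'rV[R]_n) : R := Num.sqrt (dotv u u).

Definition has_grad {R : realType} {n : nat} (f : 'rV[R]_n -> R) (g x : 'rV[R]_n) : Prop :=
  forall eps : R, 0 < eps -> exists delta : R, 0 < delta /\
    forall h : 'rV[R]_n, enorm h < delta ->
      `|f (x + h) - f x - dotv g h| <= eps * enorm h.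

Definition grad_lipschitz_on {R : realType} {n : nat} (S : set 'rV[R]_n)
  (g : 'rV[R]_n -> 'rV[R]_n) (L : R) : Prop :=
  forall x y, S x -> S y -> enorm (g x - g y) <= L * enorm (x - y).

Definition edom {R : realType} {n : nat} (chi : 'rV[R]_n -> \bar R) : set 'rV[R]_n :=
  [set x | (chi x < +oo)%E].

Definition proper_fun {R : realType} {n : nat} (chi : 'rV[R]_n -> \bar R) : Prop :=
  (forall x, chi x != -oo%E) /\ (exists x, edom chi x).

Definition convex_ext {R : realType} {n : nat} (chi : 'rV[R]_n -> \bar R) : Prop :=
  forall (x y : 'rV[R]_n) (t : R), edom chi x -> edom chi y -> 0 <= t <= 1 ->
    (chi (t *: x + (1 - t) *: y)%R <= (t * fine (chi x) + (1 - t) * fine (chi y))%:E)%E.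

Definition lsc_ext {R : realType} {n : nat} (chi : 'rV[R]_n -> \bar R) : Prop :=
  forall (x : 'rV[R]_n) (a : R), (a%:E < chi x)%E ->
    exists delta : R, 0 < delta /\
      forall y, enorm (y - x) < delta -> (a%:E < chi y)%E.

Definition convex_real {R : realType} {n : nat} (chi : 'rV[R]_n -> R) : Prop :=
  forall (x y : 'rV[R]_n) (t : R), 0 <= t <= 1 ->
    chi (t *: x + (1 - t) *: y) <= t * chi x + (1 - t) * chi y.

Definition continuous_on_set {R : realType} {n : nat} (S : set 'rV[R]_n)
  (chi : 'rV[R]_n -> R) : Prop :=
  forall x, S x -> forall eps : R, 0 < eps -> exists delta : R, 0 < delta /\
    forall y, S y -> enorm (y - x) < delta -> `|chi y - chi x| < eps.

Definition subdiff_ext {R : realType} {n : nat} (chi : 'rV[R]_n -> \bar R)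
  (x : 'rV[R]_n) : set 'rV[R]_n :=
  [set s | edom chi x /\ forall y, ((fine (chi x) + dotv s (y - x))%:E <= chi y)%E].
Definition subdiff_real {R : realType} {n : nat} (chi : 'rV[R]_n -> R)
  (x : 'rV[R]_n) : set 'rV[R]_n :=
  [set s | forall y, chi x + dotv s (y - x) <= chi y].

(* ||S||_- := inf { ||s|| : s in S }  (= +oo if S is empty) *)
Definition inf_norm {R : realType} {n : nat} (S : set 'rV[R]_n) : \bar R :=
  ereal_inf [set (enorm s)%:E | s in S].

Definition subdiff_lagr {R : realType} {n m : nat}
  (gradf0 : 'rV[R]_n -> 'rV[R]_n) (chi0 : 'rV[R]_n -> \bar R)
  (gradf : 'I_m -> 'rV[R]_n -> 'rV[R]_n) (chi : 'I_m -> 'rV[R]_n -> R)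
  (lam : 'rV[R]_m) (x : 'rV[R]_n) : set 'rV[R]_n :=
  [set v | exists (s0 : 'rV[R]_n) (s : 'I_m -> 'rV[R]_n),
     subdiff_ext chi0 x s0 /\ (forall i, subdiff_real (chi i) x (s i)) /\
     v = gradf0 x + s0 + \sum_(i < m) lam 0 i *: (gradf i x + s i)].

Definition psi0 {R : realType} {n : nat} (f0 : 'rV[R]_n -> R) (chi0 : 'rV[R]_n -> \bar R)
  (x : 'rV[R]_n) : \bar R := ((f0 x)%:E + chi0 x)%E.
Definition psii {R : realType} {n m : nat} (f : 'I_m -> 'rV[R]_n -> R)
  (chi : 'I_m -> 'rV[R]_n -> R) (x : 'rV[R]_n) (i : 'I_m) : R := f i x + chi i x.

Definition batch_grad {R : realType} {n : nat} {T : Type}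
  (gradF : 'rV[R]_n -> T -> 'rV[R]_n) (b : nat -> nat) (xi : nat -> nat -> T)
  (x : nat -> 'rV[R]_n) (k : nat) : 'rV[R]_n :=
  (b k)%:R^-1 *: \sum_(j < b k) gradF (x k) (xi j k).

Definition psi0k {R : realType} {n : nat} (G xk : 'rV[R]_n) (gam : R)
  (chi0 : 'rV[R]_n -> \bar R) (y : 'rV[R]_n) : \bar R :=
  ((dotv G y + gam / 2 * enorm (y - xk) ^+ 2)%:E + chi0 y)%E.
Definition psiik {R : realType} {n m : nat} (f : 'I_m -> 'rV[R]_n -> R)
  (gradf : 'I_m -> 'rV[R]_n -> 'rV[R]_n) (chi : 'I_m -> 'rV[R]_n -> R)
  (Lv : 'rV[R]_m) (xk : 'rV[R]_n) (i : 'I_m) (y : 'rV[R]_n) : R :=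
  f i xk + dotv (gradf i xk) (y - xk) + Lv 0 i / 2 * enorm (y - xk) ^+ 2 + chi i y.

(* compactness in the (product = Euclidean) topology of R^n *)
Definition compact_rV {R : realType} {n : nat} (A : set 'rV[R]_n) : Prop :=
  @compact (matrix_matrix__canonical__normed_module_NormedModule R 1 n) A.

(* Testing the KKT system of the k-th subproblem against d_k = x^{k+1} - x^k, the
   multiplier terms are nonnegative (convexity of chi_i, complementary slackness and
   feasibility of x^k for the eta^k-constraints), so the descent lemma for f_0 and Young's
   inequality for the noise zeta^k give
     (2 gamma_k - beta_k - L_0) |d_k|^2 / 2 <= psi_0(x^k) - psi_0(x^{k+1}) + |zeta^k|^2 / (2 beta_k).
   Weighting by the nondecreasing alpha_k and telescoping bounds the weighted sum of the
   |d_k|^2 by alpha_K (L_0 D^2 + sum_k |zeta^k|^2 / (2 beta_k)).  The KKT system also exhibits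
   an element of d_x L(x^{k+1}, lambda^{k+1}) of norm at most
   (gamma_k + L_0 + 2 B |L|) |d_k| + |zeta^k|, and complementary slackness bounds
   lambda_i^{k+1} |psi_i(x^{k+1}) - eta_i| through eta - eta^k and L_i |d_k|^2; both estimates
   then follow from the telescoped sum. *)

From HB Require Import structures.
From mathcomp Require Import all_boot all_order all_algebra.
From mathcomp Require Import all_classical all_reals all_analysis.
From mathcomp Require Import ring lra.
Import Order.TTheory GRing.Theory Num.Theory numFieldNormedType.Exports.
Local Open Scope ring_scope.
Local Open Scope classical_set_scope.
Set Implicit Arguments. Unset Strict Implicit.

Section Euclidean.
Variables (R : realType) (n : nat).
Implicit Types (u v w : 'rV[R]_n) (a : R).

Lemma dotvC u v : dotv u v = dotv v u.
Proof. by apply: eq_bigr => i _; rewrite mulrC. Qed.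

Lemma dotvDl u v w : dotv (u + v) w = dotv u w + dotv v w.
Proof. by rewrite /dotv -big_split; apply: eq_bigr => i _; rewrite !mxE mulrDl. Qed.

Lemma dotvZl a u v : dotv (a *: u) v = a * dotv u v.
Proof. by rewrite /dotv mulr_sumr; apply: eq_bigr => i _; rewrite !mxE mulrA. Qed.

Lemma dotvNl u v : dotv (- u) v = - dotv u v.
Proof. by rewrite -scaleN1r dotvZl mulN1r. Qed.

Lemma dotvBl u v w : dotv (u - v) w = dotv u w - dotv v w.
Proof. by rewrite dotvDl dotvNl. Qed.

Lemma dotvDr u v w : dotv w (u + v) = dotv w u + dotv w v.
Proof. by rewrite dotvC dotvDl !(dotvC w). Qed.

Lemma dotvZr a u v : dotv v (a *: u) = a * dotv v u.
Proof. by rewrite dotvC dotvZl dotvC. Qed.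

Lemma dotvNr u v : dotv v (- u) = - dotv v u.
Proof. by rewrite dotvC dotvNl dotvC. Qed.

Lemma dotvBr u v w : dotv w (u - v) = dotv w u - dotv w v.
Proof. by rewrite dotvDr dotvNr. Qed.

Lemma dotv0l v : dotv 0 v = 0.
Proof. by rewrite /dotv big1 // => i _; rewrite mxE mul0r. Qed.

Lemma dotv_suml m (F : 'I_m -> 'rV[R]_n) v :
  dotv (\sum_(i < m) F i) v = \sum_(i < m) dotv (F i) v.
Proof.
elim/big_ind2: _ => [|x1 y1 x2 y2 <- <-|//]; first by rewrite dotv0l.
by rewrite dotvDl.
Qed.

Lemma dotvv_ge0 u : 0 <= dotv u u.
Proof. by apply: sumr_ge0 => i _; rewrite -expr2 sqr_ge0. Qed.

Lemma dotvv_eq0 u : dotv u u = 0 -> u = 0.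
Proof.
move=> /eqP; rewrite psumr_eq0 => [/allP u0|i _]; last by rewrite -expr2 sqr_ge0.
apply/rowP => i; rewrite mxE.
by have := u0 i (mem_index_enum _); rewrite /= -expr2 sqrf_eq0 => /eqP.
Qed.

Lemma enorm_ge0 u : 0 <= enorm u.
Proof. exact: sqrtr_ge0. Qed.

Lemma sqr_enorm u : enorm u ^+ 2 = dotv u u.
Proof. by rewrite /enorm sqr_sqrtr // dotvv_ge0. Qed.

Lemma enormZ a u : enorm (a *: u) = `|a| * enorm u.
Proof.
by rewrite /enorm dotvZl dotvZr mulrA -expr2 sqrtrM ?sqr_ge0 // sqrtr_sqr.
Qed.

Lemma enormN u : enorm (- u) = enorm u.
Proof. by rewrite -scaleN1r enormZ normrN normr1 mul1r. Qed.

Lemma enorm0 : enorm (0 : 'rV[R]_n) = 0.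
Proof. by rewrite /enorm dotv0l sqrtr0. Qed.

Lemma enorm_eq0 u : enorm u = 0 -> u = 0.
Proof. by move=> u0; apply: dotvv_eq0; rewrite -sqr_enorm u0 expr0n. Qed.

Lemma dotv_le_enorm u v : dotv u v <= enorm u * enorm v.
Proof.
have [u0|u0] := eqVneq (enorm u) 0; first by rewrite (enorm_eq0 u0) dotv0l enorm0 mul0r.
have [v0|v0] := eqVneq (enorm v) 0.
  by rewrite (enorm_eq0 v0) dotvC dotv0l enorm0 mulr0.
have uv_gt0 : 0 < enorm u * enorm v by rewrite mulr_gt0 // lt_def ?u0 ?v0 enorm_ge0.
(* [0 <= |(|v| u - |u| v)|^2 = 2 |u| |v| (|u| |v| - u.v)] *)
have := dotvv_ge0 (enorm v *: u - enorm u *: v).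
rewrite dotvBl !dotvBr !dotvZl !dotvZr -!sqr_enorm (dotvC v u) => ge0.
rewrite -(ler_pM2l uv_gt0); nra.
Qed.

Lemma normr_dotv_le u v : `|dotv u v| <= enorm u * enorm v.
Proof.
rewrite ler_norml dotv_le_enorm andbT lerNl -dotvNl.
by apply: le_trans (dotv_le_enorm _ _) _; rewrite enormN.
Qed.

Lemma dotv_le_bound u v a : enorm u <= a -> dotv u v <= a * enorm v.
Proof. by move=> ua; apply: le_trans (dotv_le_enorm _ _) (ler_wpM2r (enorm_ge0 _) ua). Qed.

Lemma ler_enormD u v : enorm (u + v) <= enorm u + enorm v.
Proof.
rewrite -ler_sqr ?nnegrE ?addr_ge0 ?enorm_ge0 //.
rewrite sqr_enorm dotvDl !dotvDr -!sqr_enorm (dotvC v u).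
have := dotv_le_enorm u v; nra.
Qed.

Lemma ler_enorm_sum m (F : 'I_m -> 'rV[R]_n) :
  enorm (\sum_(i < m) F i) <= \sum_(i < m) enorm (F i).
Proof.
elim/big_ind2: _ => [|x1 y1 x2 y2 le1 le2|//]; first by rewrite enorm0.
by apply: le_trans (ler_enormD _ _) _; apply: lerD.
Qed.

Lemma sqr_enormB_le u v : enorm (u - v) ^+ 2 <= 2 * enorm u ^+ 2 + 2 * enorm v ^+ 2.
Proof.
have := dotvv_ge0 (u + v).
rewrite sqr_enorm dotvBl !dotvBr dotvDl !dotvDr -!sqr_enorm (dotvC v u); lra.
Qed.

Lemma young_dotv u v b : 0 < b -> - dotv u v <= enorm u ^+ 2 / (2 * b) + b / 2 * enorm v ^+ 2.
Proof.
move=> b_gt0; have := dotvv_ge0 (u + b *: v).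
rewrite dotvDl !dotvDr !dotvZl !dotvZr -!sqr_enorm (dotvC v u).
set U := enorm u ^+ 2; set V := enorm v ^+ 2; set W := dotv u v => ge0.
have -> : U / (2 * b) + b / 2 * V = (U + b * W + b * (W + b * V)) / (2 * b) - W.
  by field; rewrite gt_eqF.
by rewrite lerBrDr addrC subrr divr_ge0 //; lra.
Qed.

End Euclidean.

Section Descent.
Variable R : realType.

Lemma is_derive_eps_delta (psi : R -> R) (t D : R) :
  (forall e : R, 0 < e -> exists2 d : R, 0 < d &
     forall s, `|s| < d -> `|psi (t + s) - psi t - s * D| <= e * `|s|) ->
  is_derive t 1 psi D.
Proof.
move=> psiD.
have quotient_cvg : h^-1 *: ((psi \o shift t) (h *: (1 : R)) - psi t) @[h --> (0 : R)^'] --> D.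
  apply/cvgrPdist_le => e e_gt0.
  have [d d_gt0 dP] := psiD e e_gt0.
  apply: filterS (dnbhs_ball (0 : R) d_gt0) => s [/= s_lt s0].
  rewrite /ball /= sub0r normrN in s_lt.
  have s_gt0 : 0 < `|s| by rewrite normr_gt0; apply/eqP.
  have := dP s s_lt; rewrite /GRing.scale /= mulr1 [s + t]addrC.
  have -> : D - s^-1 * (psi (t + s) - psi t) = - (psi (t + s) - psi t - s * D) / s.
    by field; apply/eqP.
  by rewrite normrM normrN normrV ?unitfE ?normr_eq0; [rewrite ler_pdivrMr | apply/eqP].
by apply: DeriveDef; [apply/cvg_ex; exists D | apply: cvg_lim].
Qed.

Lemma has_grad_is_derive_line n (f : 'rV[R]_n -> R) (g x h : 'rV[R]_n) (t : R) :
  has_grad f g (x + t *: h) -> is_derive t 1 (fun s => f (x + s *: h)) (dotv g h).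
Proof.
move=> gradP; apply: is_derive_eps_delta => e e_gt0.
have h1_gt0 : 0 < enorm h + 1 by rewrite ltr_wpDl ?enorm_ge0.
have [d [d_gt0 dP]] := gradP _ (divr_gt0 e_gt0 h1_gt0).
exists (d / (enorm h + 1)); first by rewrite divr_gt0.
move=> s; rewrite ltr_pdivlMr // => s_lt.
have sh_lt : enorm (s *: h) < d.
  rewrite enormZ; apply: le_lt_trans s_lt.
  by rewrite ler_wpM2l ?normr_ge0 // lerDl.
have := dP _ sh_lt; rewrite scalerDl addrA dotvZr enormZ => /le_trans; apply.
have -> : e / (enorm h + 1) * (`|s| * enorm h) = e * `|s| * (enorm h / (enorm h + 1)).
  by field; rewrite gt_eqF.
rewrite ler_piMr ?mulr_ge0 ?normr_ge0 ?(ltW e_gt0) //.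
by rewrite ler_pdivrMr // mul1r lerDl.
Qed.

(* [psi s := phi s - s phi'(0) - M s^2 / 2] has a nonpositive derivative, so the mean value theorem applies. *)
Lemma deriv_growth_le (phi dphi : R -> R) (M : R) :
  (forall t : R, 0 <= t <= 1 -> is_derive t 1 phi (dphi t)) ->
  (forall t : R, 0 < t < 1 -> dphi t - dphi 0 <= M * t) ->
  phi 1 - phi 0 - dphi 0 <= M / 2.
Proof.
move=> dphiP growth.
pose psi s := phi s - (s * dphi 0 + M / 2 * s ^+ 2).
have dpsiP (t : R) : 0 <= t <= 1 -> is_derive t 1 psi (dphi t - (dphi 0 + M * t)).
  move=> /dphiP dphit; apply: is_derive_eq.
  rewrite scaler0 add0r /GRing.scale /= !mulr1; congr (_ - (_ + _)).
  by rewrite -mulr2n mulrnAr -mulrnAl -mulr_natr divfK // pnatr_eq0.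
have psi_cont : {within `[0, 1], continuous psi}.
  apply: derivable_within_continuous => t; rewrite in_itv /= => t01.
  by have [] := dpsiP t t01.
have dpsi_open (t : R) : t \in `]0, 1[%R -> is_derive t 1 psi (dphi t - (dphi 0 + M * t)).
  by rewrite in_itv => /andP[t0 t1]; apply: dpsiP; rewrite !ltW.
have [t t01 mvt] := MVT ltr01 dpsi_open psi_cont.
move: t01 mvt; rewrite in_itv /= /psi => /growth.
rewrite expr1n expr0n /= !mul0r !mul1r !mulr0 !addr0 subr0 mulr1; lra.
Qed.

Lemma descent_lemma n (S : set 'rV[R]_n) (f : 'rV[R]_n -> R) (g : 'rV[R]_n -> 'rV[R]_n)
    (L : R) (x y : 'rV[R]_n) :
  (forall z, S z -> has_grad f (g z) z) -> grad_lipschitz_on S g L ->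
  (forall t : R, 0 <= t <= 1 -> S (x + t *: (y - x))) ->
  `|f y - f x - dotv (g x) (y - x)| <= L / 2 * enorm (y - x) ^+ 2.
Proof.
move=> gradP lipg segS; set h := y - x.
pose phi s := f (x + s *: h); pose dphi t := dotv (g (x + t *: h)) h.
have Sx : S x by have := segS 0; rewrite scale0r addr0; apply; rewrite lexx ler01.
have dphiP (t : R) : 0 <= t <= 1 -> is_derive t 1 phi (dphi t).
  by move=> /segS St; apply: has_grad_is_derive_line; apply: gradP.
have growth (t : R) : 0 < t < 1 -> `|dphi t - dphi 0| <= L * enorm h ^+ 2 * t.
  move=> /andP[t_gt0 t_lt1]; rewrite /dphi scale0r addr0 -dotvBl.
  apply: le_trans (normr_dotv_le _ _) _.
  have St : S (x + t *: h) by apply: segS; rewrite !ltW.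
  have := lipg _ _ St Sx.
  rewrite addrAC subrr add0r enormZ gtr0_norm // => lip.
  by rewrite expr2 mulrAC mulrA -[_ * t * _]mulrA ler_wpM2r ?enorm_ge0.
have phi1 : phi 1 = f y by rewrite /phi scale1r /h addrC subrK.
have phi0 : phi 0 = f x by rewrite /phi scale0r addr0.
have dphi0 : dphi 0 = dotv (g x) h by rewrite /dphi scale0r addr0.
have upper := deriv_growth_le dphiP (fun t t01 => le_trans (ler_norm _) (growth t t01)).
have lower : - phi 1 - - phi 0 - - dphi 0 <= L * enorm h ^+ 2 / 2.
  apply: (@deriv_growth_le (fun s => - phi s) (fun t => - dphi t)) => t t01.
    exact: is_deriveN (dphiP t t01).
  by have := growth t t01; rewrite ler_norml => /andP[lo _]; lra.
rewrite phi1 phi0 dphi0 in upper lower; rewrite ler_norml; apply/andP; split; lra.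
Qed.

End Descent.

Section EffectiveDomain.
Variables (R : realType) (n : nat) (chi : 'rV[R]_n -> \bar R).

Lemma edom_segment (x y : 'rV[R]_n) : convex_ext chi -> edom chi x -> edom chi y ->
  forall t : R, 0 <= t <= 1 -> edom chi (x + t *: (y - x)).
Proof.
move=> chi_convex x_dom y_dom t t01.
have -> : x + t *: (y - x) = t *: y + (1 - t) *: x.
  by rewrite scalerBr scalerBl scale1r addrCA addrC.
by apply: le_lt_trans (chi_convex _ _ _ y_dom x_dom t01) _; apply: ltry.
Qed.

Lemma edom_fin_num (z : 'rV[R]_n) : proper_fun chi -> edom chi z -> chi z \is a fin_num.
Proof. by case=> /(_ z) + _; rewrite /edom /= fin_numE => -> /lt_eqF ->. Qed.

Lemma subdiff_ext_le (y s z : 'rV[R]_n) : proper_fun chi -> edom chi z ->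
  subdiff_ext chi y s -> fine (chi y) + dotv s (z - y) <= fine (chi z).
Proof.
by move=> chi_proper /(edom_fin_num chi_proper)/fineK zE [_ /(_ z)]; rewrite -zE lee_fin.
Qed.

End EffectiveDomain.

Lemma psiik_bounds (R : realType) (n m : nat) (f : 'I_m -> 'rV[R]_n -> R)
    (gradf : 'I_m -> 'rV[R]_n -> 'rV[R]_n) (chi : 'I_m -> 'rV[R]_n -> R)
    (Lv : 'rV[R]_m) (xk y : 'rV[R]_n) (i : 'I_m) :
  `|f i y - f i xk - dotv (gradf i xk) (y - xk)| <= Lv 0 i / 2 * enorm (y - xk) ^+ 2 ->
  psii f chi y i <= psiik f gradf chi Lv xk i y /\
  psiik f gradf chi Lv xk i y <= psii f chi y i + Lv 0 i * enorm (y - xk) ^+ 2.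
Proof. by rewrite ler_norml /psii /psiik => /andP[lo hi]; split; lra. Qed.

Definition subproblem_kkt {R : realType} {n m : nat} (chi0 : 'rV[R]_n -> \bar R)
    (f : 'I_m -> 'rV[R]_n -> R) (gradf : 'I_m -> 'rV[R]_n -> 'rV[R]_n)
    (chi : 'I_m -> 'rV[R]_n -> R) (Lv : 'rV[R]_m) (G xk : 'rV[R]_n) (gam : R)
    (etak lam : 'rV[R]_m) (y : 'rV[R]_n) : Prop :=
  (forall i, 0 <= lam 0 i) /\
  (exists (s0 : 'rV[R]_n) (s : 'I_m -> 'rV[R]_n),
     subdiff_ext chi0 y s0 /\ (forall i, subdiff_real (chi i) y (s i)) /\
     G + gam *: (y - xk) + s0
     + \sum_(i < m) lam 0 i *: (gradf i xk + Lv 0 i *: (y - xk) + s i) = 0) /\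
  (forall i, lam 0 i * (psiik f gradf chi Lv xk i y - etak 0 i) = 0).

Section Subproblem.
Variables (R : realType) (n m : nat) (chi0 : 'rV[R]_n -> \bar R)
  (f : 'I_m -> 'rV[R]_n -> R) (gradf : 'I_m -> 'rV[R]_n -> 'rV[R]_n)
  (chi : 'I_m -> 'rV[R]_n -> R) (Lv : 'rV[R]_m) (G xk y : 'rV[R]_n) (gam : R)
  (etak lam : 'rV[R]_m).
Hypothesis kkt : subproblem_kkt chi0 f gradf chi Lv G xk gam etak lam y.
Hypothesis Lv_ge0 : forall i, 0 <= Lv 0 i.

Lemma kkt_descent_direction : (forall i, psii f chi xk i <= etak 0 i) ->
  exists2 s0, subdiff_ext chi0 y s0 &
    dotv G (y - xk) + gam * enorm (y - xk) ^+ 2 + dotv s0 (y - xk) <= 0.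
Proof.
move=> xk_feas; have [lam_ge0 [[s0 [s [s0P [sP kktE]]]] compl]] := kkt.
exists s0 => //; set d := y - xk.
(* convexity of chi_i and complementary slackness: each term is at least [lam_i (eta_i^k - psi_i(xk)) >= 0] *)
have term_ge0 i : 0 <= dotv (lam 0 i *: (gradf i xk + Lv 0 i *: d + s i)) d.
  rewrite dotvZl !dotvDl dotvZl -sqr_enorm.
  have chi_le := sP i xk; rewrite -opprB dotvNr -/d in chi_le.
  have := xk_feas i; rewrite /psii => feas_i.
  have := compl i; rewrite /psiik -/d => compl_i.
  rewrite -(subr0 (lam 0 i * _)) -{2}compl_i -mulrBr mulr_ge0 //.
  by have := mulr_ge0 (Lv_ge0 i) (sqr_ge0 (enorm d)); lra.
have := congr1 (dotv^~ d) kktE; rewrite /= dotv0l !dotvDl dotvZl dotv_suml -sqr_enorm.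
have : 0 <= \sum_(i < m) dotv (lam 0 i *: (gradf i xk + Lv 0 i *: d + s i)) d.
  by apply: sumr_ge0 => i _; apply: term_ge0.
lra.
Qed.

Lemma kkt_sufficient_decrease (f0 : 'rV[R]_n -> R) (gradf0 : 'rV[R]_n -> 'rV[R]_n)
    (L0 beta : R) :
  proper_fun chi0 -> edom chi0 xk -> (forall i, psii f chi xk i <= etak 0 i) -> 0 < beta ->
  f0 y - f0 xk - dotv (gradf0 xk) (y - xk) <= L0 / 2 * enorm (y - xk) ^+ 2 ->
  (2 * gam - beta - L0) / 2 * enorm (y - xk) ^+ 2
    <= f0 xk + fine (chi0 xk) - (f0 y + fine (chi0 y))
       + enorm (G - gradf0 xk) ^+ 2 / (2 * beta).
Proof.
move=> chi0_proper xk_dom xk_feas beta_gt0 descent.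
have [s0 s0P dir] := kkt_descent_direction xk_feas.
have := subdiff_ext_le chi0_proper xk_dom s0P; rewrite -opprB dotvNr.
have := young_dotv (G - gradf0 xk) (y - xk) beta_gt0; rewrite dotvBl; lra.
Qed.

Lemma kkt_residual_le (gradf0 : 'rV[R]_n -> 'rV[R]_n) (L0 B : R) :
  0 < gam -> enorm (gradf0 y - gradf0 xk) <= L0 * enorm (y - xk) ->
  (forall i, enorm (gradf i y - gradf i xk) <= Lv 0 i * enorm (y - xk)) ->
  enorm lam <= B ->
  exists2 v, subdiff_lagr gradf0 chi0 gradf chi lam y v &
    enorm v ^+ 2 <= 2 * (gam + L0 + 2 * B * enorm Lv) ^+ 2 * enorm (y - xk) ^+ 2
                    + 2 * enorm (G - gradf0 xk) ^+ 2.
Proof.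
move=> gam_gt0 lip0 lipi lam_le.
have [lam_ge0 [[s0 [s [s0P [sP kktE]]]] _]] := kkt; set d := y - xk.
pose W := \sum_(i < m) lam 0 i *: (gradf i y - gradf i xk - Lv 0 i *: d).
pose w := gradf0 y - gradf0 xk - gam *: d + W.
exists (gradf0 y + s0 + \sum_(i < m) lam 0 i *: (gradf i y + s i)); first by exists s0, s.
have -> : gradf0 y + s0 + \sum_(i < m) lam 0 i *: (gradf i y + s i) = w - (G - gradf0 xk).
  have multE : \sum_(i < m) lam 0 i *: (gradf i y + s i)
      - \sum_(i < m) lam 0 i *: (gradf i xk + Lv 0 i *: d + s i) = W.
    rewrite -sumrB; apply: eq_bigr => i _; rewrite -scalerBr; congr (_ *: _).
    by apply/rowP => j; rewrite !mxE; ring.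
  apply/rowP => j; move: kktE multE => /rowP/(_ j) + /rowP/(_ j).
  by rewrite /w !mxE; lra.
have W_le : enorm W <= 2 * B * enorm Lv * enorm d.
  apply: le_trans (ler_enorm_sum _) _.
  apply: le_trans (_ : \sum_(i < m) lam 0 i * (2 * Lv 0 i * enorm d) <= _).
    apply: ler_sum => i _; rewrite enormZ ger0_norm // ler_wpM2l //.
    apply: le_trans (ler_enormD _ _) _; rewrite enormN enormZ ger0_norm //.
    by have := lipi i; lra.
  have -> : \sum_(i < m) lam 0 i * (2 * Lv 0 i * enorm d) = 2 * enorm d * dotv lam Lv.
    by rewrite /dotv mulr_sumr; apply: eq_bigr => i _; ring.
  have := dotv_le_bound Lv lam_le; have := enorm_ge0 d; nra.
have w_le : enorm w <= (gam + L0 + 2 * B * enorm Lv) * enorm d.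
  apply: le_trans (ler_enormD _ _) _; apply: le_trans (lerD (ler_enormD _ _) (lexx _)) _.
  by rewrite enormN enormZ gtr0_norm //; lra.
apply: le_trans (sqr_enormB_le _ _) _.
by have := enorm_ge0 w; nra.
Qed.

Lemma kkt_complementarity_le (eta : 'rV[R]_m) (B : R) :
  (forall i, psii f chi y i <= eta 0 i) ->
  (forall i, psiik f gradf chi Lv xk i y <= psii f chi y i + Lv 0 i * enorm (y - xk) ^+ 2) ->
  enorm lam <= B ->
  \sum_(i < m) lam 0 i * `|psii f chi y i - eta 0 i|
    <= B * enorm (eta - etak) + B * enorm Lv * enorm (y - xk) ^+ 2.
Proof.
move=> y_feas psiik_le lam_le; have [lam_ge0 [_ compl]] := kkt.
(* by complementarity, [eta_i - psi_i(y) = (eta_i - eta_i^k) + (psi_i^k(y) - psi_i(y))] on the support of lam *)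
apply: le_trans (_ : _ <= dotv lam (eta - etak) + dotv lam Lv * enorm (y - xk) ^+ 2) _.
  rewrite /dotv mulr_suml -big_split; apply: ler_sum => i _ /=.
  rewrite !mxE ler0_norm ?subr_le0 //.
  have slack : 0 <= psii f chi y i + Lv 0 i * enorm (y - xk) ^+ 2
                    - psiik f gradf chi Lv xk i y by rewrite subr_ge0.
  by have := mulr_ge0 (lam_ge0 i) slack; have := compl i; lra.
have := dotv_le_bound (eta - etak) lam_le; have := dotv_le_bound Lv lam_le.
by have := sqr_ge0 (enorm (y - xk)); nra.
Qed.

End Subproblem.

Section WeightedSums.
Variables (R : realType) (K : nat) (alpha : nat -> R).
Hypothesis alpha_ge0 : forall k, (k <= K)%N -> 0 <= alpha k.
Hypothesis alpha_incr : forall k, (k < K)%N -> alpha k <= alpha k.+1.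

Lemma alpha_le_last k : (k <= K)%N -> alpha k <= alpha K.
Proof.
move=> kK.
apply: (homo_leq_in (D := [pred i | (i <= K)%N]) (f := alpha) lexx le_trans) => //.
- by move=> i j _ jK p /andP[_ /ltnW pj]; rewrite inE (leq_trans pj).
- by move=> i _; rewrite inE; apply: alpha_incr.
- by rewrite inE.
Qed.

Lemma weighted_telescope (a p e : nat -> R) (pmin : R) :
  (forall k, 0 <= a k) -> (forall k, a k <= p k - p k.+1 + e k) -> (forall k, pmin <= p k) ->
  \sum_(k < K.+1) alpha k * a k <= alpha K * (p 0%N - pmin + \sum_(k < K.+1) e k).
Proof.
move=> a_ge0 a_le p_ge.
apply: le_trans (_ : _ <= \sum_(k < K.+1) alpha K * (p k - p k.+1 + e k)) _.
  apply: ler_sum => k _; have kK : (k <= K)%N by rewrite -ltnS.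
  apply: le_trans (ler_wpM2r (a_ge0 k) (alpha_le_last kK)) _.
  by rewrite ler_wpM2l ?alpha_ge0.
have telescope : \sum_(k < K.+1) (p k - p k.+1) = p 0%N - p K.+1.
  rewrite -(big_mkord xpredT (fun k => p k - p k.+1)) -opprB.
  rewrite -(telescope_sumr p (leq0n K.+1)) -sumrN.
  by apply: eq_bigr => k _; rewrite opprB.
rewrite -mulr_sumr big_split /= telescope ler_wpM2l ?alpha_ge0 //.
by have := p_ge K.+1; lra.
Qed.

Lemma sum_stationarity_le (w beta den d z : nat -> R) (Q : R) :
  (forall k, 0 < beta k) -> (forall k, 0 < den k) ->
  \sum_(k < K.+1) alpha k * (w k / 2 * d k)
    <= alpha K * (Q + \sum_(k < K.+1) z k / (2 * beta k)) ->
  \sum_(k < K.+1) alpha k * w k / (4 * den k) * (2 * den k * d k + 2 * z k)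
    <= Q * alpha K
       + \sum_(k < K.+1) (alpha k * w k / (2 * den k) + alpha K / (2 * beta k)) * z k.
Proof.
move=> beta_gt0 den_gt0 decrease.
have splitE : \sum_(k < K.+1) alpha k * w k / (4 * den k) * (2 * den k * d k + 2 * z k)
    = \sum_(k < K.+1) alpha k * (w k / 2 * d k)
      + \sum_(k < K.+1) alpha k * w k / (2 * den k) * z k.
  rewrite -big_split; apply: eq_bigr => k _ /=.
  by field; rewrite (lt0r_neq0 (den_gt0 k)).
have noiseE : \sum_(k < K.+1) (alpha k * w k / (2 * den k) + alpha K / (2 * beta k)) * z k
    = \sum_(k < K.+1) alpha k * w k / (2 * den k) * z k
      + alpha K * \sum_(k < K.+1) z k / (2 * beta k).
  rewrite mulr_sumr -big_split; apply: eq_bigr => k _ /=.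
  by field; rewrite (lt0r_neq0 (beta_gt0 k)) (lt0r_neq0 (den_gt0 k)).
by rewrite splitE noiseE; lra.
Qed.

Lemma sum_complementarity_le (w beta d z h s : nat -> R) (B M Q : R) :
  (forall k, (k <= K)%N -> 0 <= w k) -> (forall k, 0 < beta k) -> 0 <= B * M ->
  (forall k, (k <= K)%N -> s k <= B * h k + B * M * d k) ->
  \sum_(k < K.+1) alpha k * (w k / 2 * d k)
    <= alpha K * (Q + \sum_(k < K.+1) z k / (2 * beta k)) ->
  \sum_(k < K.+1) alpha k * w k * s k
    <= 2 * B * M * Q * alpha K + B * M * \sum_(k < K.+1) alpha K * z k / beta k
       + B * \sum_(k < K.+1) alpha k * w k * h k.
Proof.
move=> w_ge0 beta_gt0 BM_ge0 s_le decrease.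
apply: le_trans (_ : _ <= \sum_(k < K.+1) alpha k * w k * (B * h k + B * M * d k)) _.
  apply: ler_sum => k _; have kK : (k <= K)%N by rewrite -ltnS.
  by rewrite ler_wpM2l ?mulr_ge0 ?alpha_ge0 ?w_ge0 ?s_le.
have splitE : \sum_(k < K.+1) alpha k * w k * (B * h k + B * M * d k)
    = B * \sum_(k < K.+1) alpha k * w k * h k
      + 2 * (B * M) * \sum_(k < K.+1) alpha k * (w k / 2 * d k).
  by rewrite !mulr_sumr -big_split; apply: eq_bigr => k _ /=; field.
have noiseE : \sum_(k < K.+1) alpha K * z k / beta k
    = 2 * (alpha K * \sum_(k < K.+1) z k / (2 * beta k)).
  rewrite !mulr_sumr; apply: eq_bigr => k _ /=.
  by field; rewrite (lt0r_neq0 (beta_gt0 k)).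
rewrite splitE noiseE.
by have := ler_wpM2l (mulr_ge0 (ler0n _ 2) BM_ge0) decrease; lra.
Qed.

End WeightedSums.

Lemma lee_sum_inf_norm_sqr (R : realType) (n K : nat) (a r : nat -> R)
    (S : nat -> set 'rV[R]_n) :
  (forall k, (k <= K)%N -> 0 <= a k) ->
  (forall k, exists2 v, S k v & enorm v ^+ 2 <= r k) ->
  (\sum_(k < K.+1) (a k)%:E * (inf_norm (S k) * inf_norm (S k))
    <= (\sum_(k < K.+1) a k * r k)%:E)%E.
Proof.
move=> a_ge0 resid; rewrite -sumEFin; apply: lee_sum => k _.
have [v vS v_le] := resid k.
have I_le : (inf_norm (S k) <= (enorm v)%:E)%E by apply: ereal_inf_lbound; exists v.
have I_ge0 : (0 <= inf_norm (S k))%E.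
  by apply: le_ereal_inf_tmp => _ [u _ <-]; rewrite lee_fin enorm_ge0.
have kK : (k <= K)%N by rewrite -ltnS.
rewrite EFinM lee_wpmul2l ?lee_fin ?a_ge0 //.
apply: le_trans (lee_pmul I_ge0 I_ge0 I_le I_le) _.
by rewrite -EFinM lee_fin -expr2.
Qed.

Theorem mainTheorem11
  (R : realType) (n m : nat)
  (f0 : 'rV[R]_n -> R) (gradf0 : 'rV[R]_n -> 'rV[R]_n) (chi0 : 'rV[R]_n -> \bar R)
  (f : 'I_m -> 'rV[R]_n -> R) (gradf : 'I_m -> 'rV[R]_n -> 'rV[R]_n)
  (chi : 'I_m -> 'rV[R]_n -> R)
  (L0 : R) (Lv : 'rV[R]_m) (eta : 'rV[R]_m) (psi0star : R)
  (dxi : measure_display) (Xi : measurableType dxi) (P : probability Xi R)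
  (F : 'rV[R]_n -> Xi -> R) (gradF : 'rV[R]_n -> Xi -> 'rV[R]_n) (sigma : R)
  (x : nat -> 'rV[R]_n) (etak : nat -> 'rV[R]_m) (lam : nat -> 'rV[R]_m)
  (b : nat -> nat) (xi : nat -> nat -> Xi) (gamma beta : nat -> R)
  (B : R) (alpha : nat -> R) (K : nat) :
  proper_fun chi0 -> convex_ext chi0 -> lsc_ext chi0 ->
  (forall i, convex_real (chi i)) ->
  (forall i, continuous_on_set (edom chi0) (chi i)) ->
  0 < L0 -> (forall i, 0 <= Lv 0 i) ->
  (forall y, edom chi0 y -> has_grad f0 (gradf0 y) y) ->
  grad_lipschitz_on (edom chi0) gradf0 L0 ->
  (forall i y, edom chi0 y -> has_grad (f i) (gradf i y) y) ->
  (forall i, grad_lipschitz_on (edom chi0) (gradf i) (Lv 0 i)) ->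
  (exists y, edom chi0 y /\ forall i, psii f chi y i <= eta 0 i) ->
  compact_rV [set y | edom chi0 y /\ forall i, psii f chi y i <= eta 0 i] ->
  (forall y, edom chi0 y -> (forall i, psii f chi y i <= eta 0 i) ->
     (psi0star%:E <= psi0 f0 chi0 y)%E) ->
  (forall e : R, 0 < e -> exists y, edom chi0 y /\
     (forall i, psii f chi y i <= eta 0 i) /\ (psi0 f0 chi0 y < (psi0star + e)%:E)%E) ->
  (forall xi0 y, has_grad (F^~ xi0) (gradF y xi0) y) ->
  (forall y, P.-integrable setT (fun t => (F y t)%:E) /\
             (\int[P]_t (F y t)%:E = (f0 y)%:E)%E) ->
  (forall y j, P.-integrable setT (fun t => (gradF y t 0 j)%:E) /\
             (\int[P]_t (gradF y t 0 j)%:E = (gradf0 y 0 j)%:E)%E) ->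
  (forall y, (\int[P]_t ((enorm (gradF y t - gradf0 y)) ^+ 2)%:E <= (sigma ^+ 2)%:E)%E) ->
  edom chi0 (x 0%N) ->
  (forall i, psii f chi (x 0%N) i < etak 0%N 0 i) ->
  (forall k i, etak k 0 i < etak k.+1 0 i) ->
  (forall k i, etak k 0 i < eta 0 i) ->
  (forall k, (0 < b k)%N) ->
  (forall k, 0 < gamma k) ->
  (forall k, edom chi0 (x k.+1) /\
     (forall i, psiik f gradf chi Lv (x k) i (x k.+1) <= etak k 0 i) /\
     (forall y, edom chi0 y -> (forall i, psiik f gradf chi Lv (x k) i y <= etak k 0 i) ->
        (psi0k (batch_grad gradF b xi x k) (x k) (gamma k) chi0 (x k.+1)
           <= psi0k (batch_grad gradF b xi x k) (x k) (gamma k) chi0 y)%E)) ->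
  (forall k, (forall i, 0 <= lam k.+1 0 i) /\
     (exists (s0 : 'rV[R]_n) (s : 'I_m -> 'rV[R]_n),
        subdiff_ext chi0 (x k.+1) s0 /\ (forall i, subdiff_real (chi i) (x k.+1) (s i)) /\
        batch_grad gradF b xi x k + gamma k *: (x k.+1 - x k) + s0
        + \sum_(i < m) lam k.+1 0 i *:
            (gradf i (x k) + Lv 0 i *: (x k.+1 - x k) + s i) = 0) /\
     (forall i, lam k.+1 0 i * (psiik f gradf chi Lv (x k) i (x k.+1) - etak k 0 i) = 0)) ->
  (forall k, L0 / 2 < gamma k) ->
  (forall k, 0 < beta k /\ beta k < 2 * gamma k - L0) ->
  0 < B -> (forall k, enorm (lam k.+1) <= B) ->
  (forall k, (k <= K)%N -> 0 <= alpha k) ->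
  (forall k, (k < K)%N -> alpha k <= alpha k.+1) ->
  let zeta := fun k => batch_grad gradF b xi x k - gradf0 (x k) in
  let D := Num.sqrt ((fine (psi0 f0 chi0 (x 0%N)) - psi0star) / L0) in
  let c := fun k => alpha k * (2 * gamma k - beta k - L0) in
  let den := fun k => (gamma k + L0 + 2 * B * enorm Lv) ^+ 2 in
  (\sum_(k < K.+1)
     ((c k / (4 * den k))%:E *
      (inf_norm (subdiff_lagr gradf0 chi0 gradf chi (lam k.+1) (x k.+1)) *
       inf_norm (subdiff_lagr gradf0 chi0 gradf chi (lam k.+1) (x k.+1))))
   <= (L0 * D ^+ 2 * alpha K
       + \sum_(k < K.+1) ((c k / (2 * den k) + alpha K / (2 * beta k))
                          * enorm (zeta k) ^+ 2))%:E)%E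
  /\
  \sum_(k < K.+1) c k * (\sum_(i < m) lam k.+1 0 i * `|psii f chi (x k.+1) i - eta 0 i|)
   <= 2 * B * L0 * enorm Lv * D ^+ 2 * alpha K
      + B * enorm Lv * \sum_(k < K.+1) alpha K * enorm (zeta k) ^+ 2 / beta k
      + B * \sum_(k < K.+1) c k * enorm (eta - etak k).
Proof.
move=> chi0_proper chi0_convex _ _ _ L0_gt0 Lv_ge0 grad0 lip0 gradi lipi _ _ opt_lb _ _ _ _ _
  x0_dom x0_feas etak_incr etak_lt _ gamma_gt0 subproblem kkt _ beta_bd B_gt0 lam_le_B
  alpha_ge0 alpha_incr zeta D c den.
have x_dom k : edom chi0 (x k) by case: k => // k; case: (subproblem k).
have seg k := edom_segment chi0_convex (x_dom k) (x_dom k.+1).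
have psiik_le k i := psiik_bounds chi (descent_lemma (gradi i) (lipi i) (seg k)).
have feas k i : psii f chi (x k) i <= etak k 0 i.
  elim: k => [|k IHk]; first exact: ltW.
  have := (psiik_le k i).1; have := (subproblem k).2.1 i; have := etak_incr k i; lra.
pose p k := f0 (x k) + fine (chi0 (x k)).
have psi0E k : psi0 f0 chi0 (x k) = (p k)%:E.
  by rewrite /psi0 /p EFinD fineK // edom_fin_num.
have p_ge k : psi0star <= p k.
  by rewrite -lee_fin -psi0E opt_lb // => i; apply: le_trans (feas k i) (ltW (etak_lt k i)).
have D2 : L0 * D ^+ 2 = p 0%N - psi0star.
  rewrite /D psi0E /= sqr_sqrtr ?divr_ge0 ?subr_ge0 ?p_ge ?(ltW L0_gt0) //.
  by rewrite mulrC divfK // lt0r_neq0.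
pose w k := 2 * gamma k - beta k - L0.
pose d k := enorm (x k.+1 - x k) ^+ 2.
pose z k := enorm (zeta k) ^+ 2.
have beta_gt0 k : 0 < beta k := (beta_bd k).1.
have w_gt0 k : 0 < w k by have := beta_bd k; rewrite /w; lra.
have decrease k : w k / 2 * d k <= p k - p k.+1 + z k / (2 * beta k).
  exact (kkt_sufficient_decrease (kkt k) Lv_ge0 chi0_proper (x_dom k) (feas k) (beta_gt0 k)
    (le_trans (ler_norm _) (descent_lemma grad0 lip0 (seg k)))).
have telescope := weighted_telescope alpha_ge0 alpha_incr
  (fun k => mulr_ge0 (divr_ge0 (ltW (w_gt0 k)) (ler0n _ 2)) (sqr_ge0 _)) decrease p_ge.
rewrite -D2 in telescope; split.
- have den_gt0 k : 0 < den k.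
    by rewrite exprn_gt0 // ltr_wpDr ?mulr_ge0 ?enorm_ge0 ?(ltW B_gt0) // addr_gt0.
  have resid k := kkt_residual_le (kkt k) Lv_ge0 (gamma_gt0 k)
    (lip0 _ _ (x_dom k.+1) (x_dom k)) (fun i => lipi i _ _ (x_dom k.+1) (x_dom k)) (lam_le_B k).
  apply: le_trans (lee_sum_inf_norm_sqr (a := fun k => c k / (4 * den k)) _ resid) _.
    move=> k kK; apply: divr_ge0; first exact: mulr_ge0 (alpha_ge0 k kK) (ltW (w_gt0 k)).
    exact: mulr_ge0 (ler0n _ 4) (ltW (den_gt0 k)).
  by rewrite lee_fin; apply: (sum_stationarity_le (w := w) (d := d) beta_gt0 den_gt0 telescope).
- have compl k (_ : (k <= K)%N) := kkt_complementarity_le (kkt k)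
    (fun i => le_trans (feas k.+1 i) (ltW (etak_lt k.+1 i))) (fun i => (psiik_le k i).2)
    (lam_le_B k).
  rewrite (_ : 2 * B * L0 * enorm Lv * D ^+ 2 = 2 * B * enorm Lv * (L0 * D ^+ 2)); last by ring.
  apply: (sum_complementarity_le (w := w) (d := d) alpha_ge0 _ beta_gt0 _ compl telescope).
  + by move=> k _; apply: ltW.
  + by rewrite mulr_ge0 ?enorm_ge0 ?(ltW B_gt0).
Qed.
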